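(* Let $(L,\wedge,\vee,0,1)$ be a bounded lattice with additive Nakano mosaic $(L,\boxplus,0)$, where $x\boxplus y:=\{z\in L\mid x\vee y=x\vee z=z\vee y\}$. Then for all $x,y\in L$, \[ (x\boxplus(x\boxplus y))\cap((x\boxplus y)\boxplus y)\subseteq x\boxplus y. \]
   Context: For $u\in L$ and subsets $X,Y\subseteq L$, $u\boxplus X:=\bigcup_{v\in X}u\boxplus v$ and $X\boxplus u:=\bigcup_{v\in X}v\boxplus u$. *)

From HB Require Import structures.
From mathcomp Require Import all_boot all_order.
Set Implicit Arguments. Unset Strict Implicit. Unset Printing Implicit Defensive.
Import Order.TTheory.
Local Open Scope order_scope.

Definition nakano {d : Order.disp_t} {L : latticeType d} (x y : L) : L -> Prop :=
  fun z => x `|` y = x `|` z /\ x `|` z = z `|` y.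

Definition nakanoL {d : Order.disp_t} {L : latticeType d} (u : L) (X : L -> Prop)
  : L -> Prop := fun z => exists v, X v /\ nakano u v z.

Definition nakanoR {d : Order.disp_t} {L : latticeType d} (X : L -> Prop) (u : L)
  : L -> Prop := fun z => exists v, X v /\ nakano v u z.

From mathcomp Require Import all_boot all_order.

(* z lies in x ⊞ y exactly when x ∨ z = x ∨ y and z ∨ y = x ∨ y.  Passing
   through x ⊞ (x ⊞ y) keeps the first join equal to x ∨ y, passing through
   (x ⊞ y) ⊞ y keeps the second one, so z in both sets satisfies both. *)

Set Implicit Arguments. Unset Strict Implicit. Unset Printing Implicit Defensive.
Local Open Scope order_scope.

Section NakanoJoins.
Variables (d : Order.disp_t) (L : latticeType d).
Implicit Types x y z : L.

Lemma nakano_joinl x y z : nakano x y z -> x `|` z = x `|` y.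
Proof. by case. Qed.

Lemma nakano_joinr x y z : nakano x y z -> z `|` y = x `|` y.
Proof. by case=> -> <-. Qed.

Lemma nakanoP x y z : x `|` z = x `|` y -> z `|` y = x `|` y -> nakano x y z.
Proof. by move=> xz zy; split; rewrite xz // zy. Qed.

Lemma nakanoL_nakano_joinl x y z :
  nakanoL x (nakano x y) z -> x `|` z = x `|` y.
Proof. by case=> v [/nakano_joinl <- /nakano_joinl]. Qed.

Lemma nakanoR_nakano_joinr x y z :
  nakanoR (nakano x y) y z -> z `|` y = x `|` y.
Proof. by case=> w [/nakano_joinr <- /nakano_joinr]. Qed.

End NakanoJoins.

Theorem mainTheorem15 (d : Order.disp_t) (L : tbLatticeType d) (x y : L) :
  forall z : L,
    nakanoL x (nakano x y) z -> nakanoR (nakano x y) y z -> nakano x y z.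
Proof.
move=> z /nakanoL_nakano_joinl xz /nakanoR_nakano_joinr zy.
exact: nakanoP.
Qed.
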